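(* Let $\mathbf{L}$ be a distributive lattice, $n\ge1$ an integer, $F$ an $n$-filter on $\mathbf{L}$ and $x,y\in\mathbf{L}$. Then \[ \langle F,x\rangle_n\cap\langle F,y\rangle_n=\langle F,x\vee y\rangle_n, \] where $\langle F,z\rangle_n$ denotes the $n$-filter generated by $F\cup\{z\}$.
   Context: For a set $X$, $Y\subseteq_n X$ means $Y$ is a non-empty subset of $X$ with $|Y|\le n$. An $n$-filter on a lattice is an upset $F$ such that for every non-empty finite $X\subseteq F$: if $\bigwedge Y\in F$ for every $Y\subseteq_n X$ then $\bigwedge X\in F$. The $n$-filter generated by a set is the smallest $n$-filter containing it. *)

From mathcomp Require Import all_boot all_order.
Set Implicit Arguments. Unset Strict Implicit. Unset Printing Implicit Defensive.
Import Order.Theory.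
Local Open Scope order_scope.

(* Subsets of a lattice are predicates L -> Prop. A non-empty finite subset
   is represented by a non-empty list [x :: s]; its meet is [meetl x s]. *)
Definition meetl {d} {L : latticeType d} (x : L) (s : seq L) : L :=
  foldr Order.meet x s.

Definition upset {d} {L : latticeType d} (F : L -> Prop) : Prop :=
  forall a b : L, F a -> a <= b -> F b.

Definition nfilter {d} {L : latticeType d} (n : nat) (F : L -> Prop) : Prop :=
  upset F /\
  forall (x : L) (s : seq L),
    (forall a, a \in x :: s -> F a) ->
    (forall (y : L) (t : seq L),
        {subset y :: t <= x :: s} -> size (y :: t) <= n -> F (meetl y t)) ->
    F (meetl x s).

Definition ngen {d} {L : latticeType d} (n : nat) (S : L -> Prop) : L -> Prop :=
  fun z => forall G : L -> Prop, nfilter n G -> (forall a, S a -> G a) -> G z.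

Definition ngen_with {d} {L : latticeType d} (n : nat) (F : L -> Prop) (z : L)
  : L -> Prop := ngen n (fun a => F a \/ a = z).

From mathcomp Require Import all_boot all_order.
Import Order.Theory.
Local Open Scope order_scope.

Set Implicit Arguments.
Unset Strict Implicit.
Unset Printing Implicit Defensive.

(* By distributivity, for an n-filter G and any c the set {a | a ∨ c ∈ G} is
   again an n-filter.  So if G is an n-filter containing F and x ∨ y, then
   z ∈ <F,x>_n gives z ∨ y ∈ G, and applying the same argument to
   z ∈ <F,y>_n with c = z gives z = z ∨ z ∈ G.  The reverse inclusion is
   monotonicity of generation. *)

Lemma subset_map_preim (T U : eqType) (f : T -> U) (w : seq T) (u : seq U) :
  {subset u <= map f w} -> exists2 v, {subset v <= w} & map f v = u.
Proof.
elim: u => [|b u IH] sub_u; first by exists [::].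
have [v sub_v <-] : exists2 v, {subset v <= w} & map f v = u.
  by apply: IH => a ua; apply: sub_u; rewrite in_cons ua orbT.
have /mapP[a wa ->] : b \in map f w by apply: sub_u; rewrite mem_head.
exists (a :: v) => // e; rewrite in_cons => /predU1P[-> //|]; exact: sub_v.
Qed.

Section NFilter.
Context {d : Order.disp_t} {L : distrLatticeType d}.
Implicit Types (S G : L -> Prop) (n : nat).

Lemma joinl_meetl (c x : L) (s : seq L) :
  meetl x s `|` c = meetl (x `|` c) (map (fun a => a `|` c) s).
Proof. by elim: s => [|a s IH] //=; rewrite joinIl IH. Qed.

Lemma nfilter_preim_join n G (c : L) :
  nfilter n G -> nfilter n (fun a => G (a `|` c)).
Proof.
move=> [G_up G_meet]; split=> [a b Ga le_ab|x s G_xs G_small].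
  by apply: G_up Ga _; rewrite leU2.
rewrite joinl_meetl; apply: G_meet.
  by rewrite -[_ :: _]/(map _ (x :: s)) => _ /mapP[a xs_a ->]; apply: G_xs.
move=> y t sub_yt size_yt.
have [[|a v] //= sub_v [<- eq_t]] :=
  subset_map_preim (f := Order.join^~ c) (w := x :: s) sub_yt.
rewrite -eq_t -joinl_meetl; apply: G_small sub_v _.
by rewrite -eq_t /= size_map in size_yt.
Qed.

Lemma ngen_nfilter n S : nfilter n (ngen n S).
Proof.
split=> [a b Sa le_ab G G_nf S_G|x s Sxs S_small G G_nf S_G].
  exact: G_nf.1 _ _ (Sa G G_nf S_G) le_ab.
apply: G_nf.2 => [a xs_a|y t sub_yt size_yt]; first exact: Sxs.
exact: S_small.
Qed.

Lemma ngen_ge n S (a b : L) : S a -> a <= b -> ngen n S b.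
Proof. by move=> Sa le_ab G G_nf S_G; apply: G_nf.1 (S_G a Sa) le_ab. Qed.

Lemma ngen_preim_join n S G (c z : L) :
  ngen n S z -> nfilter n G -> (forall a, S a -> G (a `|` c)) -> G (z `|` c).
Proof. by move=> Sz G_nf; apply: Sz; apply: nfilter_preim_join. Qed.

Lemma ngen_with_anti n F (x x' z : L) :
  x <= x' -> ngen_with n F x' z -> ngen_with n F x z.
Proof.
move=> le_xx' x'z; apply: x'z (ngen_nfilter _ _) _ => a [Fa|->].
  exact: ngen_ge (or_introl Fa) (lexx a).
exact: ngen_ge (or_intror erefl) le_xx'.
Qed.

Lemma ngen_withI n F (x y z : L) :
  ngen_with n F x z -> ngen_with n F y z -> ngen_with n F (x `|` y) z.
Proof.
move=> xz yz G G_nf FxyG.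
have FG a b : F a -> G (a `|` b).
  by move=> Fa; apply: G_nf.1 (FxyG a (or_introl Fa)) _; rewrite leUl.
have zyG : G (z `|` y).
  apply: (ngen_preim_join xz G_nf) => a [/FG //|->].
  exact: FxyG (or_intror erefl).
rewrite -[z]joinxx; apply: (ngen_preim_join yz G_nf) => a [/FG //|->].
by rewrite joinC.
Qed.

End NFilter.

Theorem mainTheorem9 (d : Order.disp_t) (L : distrLatticeType d) (n : nat)
  (hn : (1 <= n)%N) (F : L -> Prop) (hF : nfilter n F) (x y : L) :
  forall z : L, (ngen_with n F x z /\ ngen_with n F y z) <-> ngen_with n F (x `|` y) z.
Proof.
move=> z; split=> [[xz yz]|xyz]; first exact: ngen_withI.
by split; apply: ngen_with_anti xyz; rewrite ?leUl ?leUr.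
Qed.
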